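(* Let $\alpha\ge 0$ and $p>1$ be constants, and let $n$ be an integer with \[ n\ge 2+\frac{2(\alpha+2)}{p+1}\left(p+\sqrt{p^2+p}\right). \] Then the solution curve of the MEMS problem \[ u''+\frac{n-1}{r}u'+\lambda\frac{r^{\alpha}}{(1-u)^p}=0 \quad (0<r<1),\qquad u'(0)=0,\quad u(1)=0, \] admits at most two turns. That is, with $w$ and $\lambda(t)$ as in the context, $\lambda'(t)$ changes sign at most twice on $(0,\infty)$.
   Context: Here $\lambda>0$ is a parameter, and solutions are required to satisfy $0<u(r)<1$. Let $w(t)$ be the solution of \[ w''+\frac{n-1}{t}w'=\frac{t^{\alpha}}{w^p},\qquad w(0)=1,\quad w'(0)=0 \qquad (t>0). \] This solution is positive and increasing and is defined for all $t>0$. For each $t>0$, the function $u(r)=1-w(tr)/w(t)$ solves the problem with $\lambda=\lambda(t):=t^{\alpha+2}/w(t)^{p+1}$, and all solutions arise this way. The solution curve is \[ t\mapsto(\lambda,u(0))=\bigl(t^{\alpha+2}/w(t)^{p+1},\,1-1/w(t)\bigr), \qquad t\in(0,\infty). \] A turn of the curve is a change of sign of $\lambda'(t)$. *)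

From Stdlib Require Import Reals.
From Coquelicot Require Import Coquelicot.
Open Scope R_scope.

(* w solves  w'' + (n-1)/t w' = t^alpha / w^p  on (0,oo), w(0)=1, w'(0)=0,
   with w' = dw, w'' = ddw; w is positive (required for w^p to make sense). *)
Definition is_mems_w (n : nat) (alpha p : R) (w dw ddw : R -> R) : Prop :=
  w 0 = 1 /\
  (forall t, 0 <= t -> 0 < w t) /\
  filterlim w (at_right 0) (locally 1) /\
  filterlim dw (at_right 0) (locally 0) /\
  (forall t, 0 < t -> is_derive w t (dw t)) /\
  (forall t, 0 < t -> is_derive dw t (ddw t)) /\
  (forall t, 0 < t ->
     ddw t + (INR n - 1) / t * dw t = Rpower t alpha / Rpower (w t) p).

Definition mems_lambda (alpha p : R) (w : R -> R) (t : R) : R :=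
  Rpower t (alpha + 2) / Rpower (w t) (p + 1).

Definition at_most_two_sign_changes (f : R -> R) : Prop :=
  ~ exists t1 t2 t3 t4 : R,
      0 < t1 /\ t1 < t2 /\ t2 < t3 /\ t3 < t4 /\
      f t1 * f t2 < 0 /\ f t2 * f t3 < 0 /\ f t3 * f t4 < 0.

(* Put beta = (alpha + 2) / (p + 1).  The Emden-Fowler variables v = t^(-beta) w and u = t v'
   turn the equation for w into the autonomous equation v'' + a v' = v^(-p) - b v in s = ln t,
   with a = 2 beta + n - 2 and b = beta (beta + n - 2); moreover lambda = v^(-(p+1)), so lambda'
   has the sign of -u.  The convex nonlinearity lies above its tangent -c (v - v0) at the
   equilibrium v0, c = (p + 1) b, and the hypothesis on n says exactly that k^2 - a k + c = 0 has
   a positive root k.  Then t^(a-k) (u + k (v - v0)) is nondecreasing.  If u took the signs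
   +, -, +, then at the zeros of u in between v - v0 is first >= 0 and then <= 0, so this
   function vanishes between them; there u = -k (v - v0) forces v = v0, contradicting u < 0. *)

From Stdlib Require Import Reals Lra.
From Coquelicot Require Import Coquelicot.
Open Scope R_scope.

Lemma is_derive_eq (f : R -> R) (x l l' : R) : is_derive f x l -> l = l' -> is_derive f x l'.
Proof. now intros H <-. Qed.

Lemma is_derive_Rplus (f g : R -> R) (x df dg : R) :
  is_derive f x df -> is_derive g x dg -> is_derive (fun t => f t + g t) x (df + dg).
Proof. exact (@is_derive_plus R_AbsRing R_NormedModule f g x df dg). Qed.

Lemma is_derive_Rminus (f g : R -> R) (x df dg : R) :
  is_derive f x df -> is_derive g x dg -> is_derive (fun t => f t - g t) x (df - dg).
Proof. exact (@is_derive_minus R_AbsRing R_NormedModule f g x df dg). Qed.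

Lemma is_derive_Rmult (f g : R -> R) (x df dg : R) :
  is_derive f x df -> is_derive g x dg -> is_derive (fun t => f t * g t) x (df * g x + f x * dg).
Proof. intros Hf Hg. apply (is_derive_mult f g x df dg Hf Hg), Rmult_comm. Qed.

Lemma is_derive_Rcomp (f g : R -> R) (x df dg : R) :
  is_derive f (g x) df -> is_derive g x dg -> is_derive (fun t => f (g t)) x (dg * df).
Proof. exact (@is_derive_comp R_AbsRing R_NormedModule f g x df dg). Qed.

Lemma is_derive_Rpower (e t : R) : 0 < t ->
  is_derive (fun x => Rpower x e) t (e * Rpower t e / t).
Proof.
  intros Ht. apply is_derive_Reals.
  replace (e * Rpower t e / t) with (e * Rpower t (e - 1)).
  - now apply derivable_pt_lim_power.
  - unfold Rpower. replace ((e - 1) * ln t) with (e * ln t + - ln t) by ring.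
    rewrite exp_plus, exp_Ropp, exp_ln by exact Ht. field. lra.
Qed.

Lemma Rpower_pos (x y : R) : 0 < Rpower x y.
Proof. apply exp_pos. Qed.

Lemma is_derive_continuity_pt (g : R -> R) (t l : R) : is_derive g t l -> continuity_pt g t.
Proof.
  intros H. apply continuity_pt_filterlim, (@ex_derive_continuous R_AbsRing R_NormedModule).
  now exists l.
Qed.

Lemma is_derive_pos_right (g : R -> R) (c l : R) : is_derive g c l -> 0 < l ->
  exists d, 0 < d /\ forall h, 0 < h < d -> g c < g (c + h).
Proof.
  intros H Hl. apply is_derive_Reals in H.
  destruct (H l Hl) as [d Hd]. exists d. split; [apply cond_pos |].
  intros h Hh.
  assert (Hq := Hd h ltac:(lra) ltac:(rewrite Rabs_pos_eq; lra)).
  apply Rabs_def2 in Hq.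
  assert (0 < (g (c + h) - g c) / h * h) by (apply Rmult_lt_0_compat; lra).
  replace ((g (c + h) - g c) / h * h) with (g (c + h) - g c) in * by (field; lra).
  lra.
Qed.

Lemma last_zero (g : R -> R) (x y : R) : x < y ->
  (forall t, x <= t <= y -> continuity_pt g t) -> 0 <= g x -> g y < 0 ->
  exists c, x <= c < y /\ g c = 0 /\ forall t, c < t <= y -> g t < 0.
Proof.
  intros Hxy Hcont Hx Hy.
  set (E := fun t => x <= t <= y /\ 0 <= g t).
  destruct (completeness E) as [c [Hub Hlub]].
  { exists y. now intros t [[_ Ht] _]. }
  { exists x. split; lra. }
  assert (Hxc : x <= c) by (apply Hub; split; lra).
  assert (Hcy : c <= y) by (apply Hlub; now intros t [[_ Ht] _]).
  assert (Hafter : forall t, c < t <= y -> g t < 0).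
  { intros t Ht. apply Rnot_le_lt. intros Hg.
    assert (t <= c) by (apply Hub; split; lra). lra. }
  assert (Hgc_nonneg : 0 <= g c).
  { apply Rnot_lt_le. intros Hneg.
    destruct (Hcont c ltac:(lra) (- g c) ltac:(lra)) as [d [Hd Hnear]].
    assert (c <= c - d); [| lra].
    apply Hlub. intros t [Ht Hgt]. apply Rnot_lt_le. intros Htc.
    assert (t <= c) by (apply Hub; now split).
    destruct (Req_dec t c) as [-> | Hne]; [lra |].
    assert (Hq : Rabs (g t - g c) < - g c).
    { apply Hnear. split; [now split |]. simpl. unfold R_dist. rewrite Rabs_left1; lra. }
    apply Rabs_def2 in Hq. lra. }
  assert (Hcy_lt : c < y) by (destruct Hcy as [| ->]; lra).
  exists c. split; [lra | split; [| exact Hafter]].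
  apply Rle_antisym; [| exact Hgc_nonneg].
  apply Rnot_lt_le. intros Hpos.
  destruct (Hcont c ltac:(lra) (g c) Hpos) as [d [Hd Hnear]].
  set (t := Rmin (c + d / 2) y).
  assert (c < t /\ t <= c + d / 2 /\ t <= y) as [Hct [Htd Hty]].
  { unfold t. repeat split; [apply Rmin_case | apply Rmin_l | apply Rmin_r]; lra. }
  assert (Hq : Rabs (g t - g c) < g c).
  { apply Hnear. split; [split; [exact I | lra] |].
    simpl. unfold R_dist. rewrite Rabs_pos_eq; lra. }
  apply Rabs_def2 in Hq. specialize (Hafter t ltac:(lra)). lra.
Qed.

Lemma zero_crossing_down (g d : R -> R) (x y : R) : x < y ->
  (forall t, x <= t <= y -> is_derive g t (d t)) -> 0 < g x -> g y < 0 ->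
  exists c, x < c < y /\ g c = 0 /\ d c <= 0.
Proof.
  intros Hxy Hd Hx Hy.
  destruct (last_zero g x y) as [c [Hc [Hgc Hafter]]]; try lra.
  { intros t Ht. apply (is_derive_continuity_pt g t (d t)), Hd, Ht. }
  assert (Hxc : x < c) by (destruct (proj1 Hc) as [| <-]; lra).
  exists c. split; [lra | split; [exact Hgc |]].
  apply Rnot_lt_le. intros Hpos.
  destruct (is_derive_pos_right g c (d c) (Hd c ltac:(lra)) Hpos) as [e [He Hinc]].
  set (h := Rmin (e / 2) (y - c)).
  assert (0 < h /\ h < e /\ h <= y - c) as [Hh0 [Hhe Hhy]].
  { unfold h. repeat split; [apply Rmin_case | | apply Rmin_r]; try lra.
    apply (Rle_lt_trans _ (e / 2)); [apply Rmin_l | lra]. }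
  specialize (Hinc h ltac:(lra)). specialize (Hafter (c + h) ltac:(lra)). lra.
Qed.

Lemma zero_crossing_up (g d : R -> R) (x y : R) : x < y ->
  (forall t, x <= t <= y -> is_derive g t (d t)) -> g x < 0 -> 0 < g y ->
  exists c, x < c < y /\ g c = 0 /\ 0 <= d c.
Proof.
  intros Hxy Hd Hx Hy.
  destruct (zero_crossing_down (fun t => - g t) (fun t => - d t) x y Hxy)
    as [c [Hc [Hgc Hdc]]]; try lra.
  - intros t Ht. apply (is_derive_opp g t (d t)), Hd, Ht.
  - exists c. repeat split; lra.
Qed.

Lemma mean_value (g d : R -> R) (x y : R) : x <= y ->
  (forall t, x <= t <= y -> is_derive g t (d t)) ->
  exists c, x <= c <= y /\ g y - g x = d c * (y - x).
Proof.
  intros Hxy Hd.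
  destruct (MVT_gen g x y d) as [c [Hc Hmvt]];
    rewrite ?Rmin_left, ?Rmax_right in * by exact Hxy.
  - intros t Ht. apply Hd. lra.
  - intros t Ht. apply (is_derive_continuity_pt g t (d t)), Hd, Ht.
  - now exists c.
Qed.

Lemma is_derive_nonneg_le (g d : R -> R) (x y : R) : x <= y ->
  (forall t, x <= t <= y -> is_derive g t (d t)) -> (forall t, x <= t <= y -> 0 <= d t) ->
  g x <= g y.
Proof.
  intros Hxy Hd Hpos.
  destruct (mean_value g d x y Hxy Hd) as [c [Hc Hmvt]].
  assert (0 <= d c * (y - x)) by (apply Rmult_le_pos; [apply Hpos, Hc | lra]).
  lra.
Qed.

Lemma is_derive_0_eq (g : R -> R) (x y : R) : x <= y ->
  (forall t, x <= t <= y -> is_derive g t 0) -> g x = g y.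
Proof.
  intros Hxy Hd.
  destruct (mean_value g (fun _ => 0) x y Hxy Hd) as [c [_ Hmvt]]. lra.
Qed.

(* Convexity of [v |-> v^(-p)]: in [v = s e^u] this is [e^(-p u) >= 1 - p u] and [e^u - 1 >= u]. *)
Lemma Rpower_opp_tangent (p s v : R) : 0 <= p -> 0 < s -> 0 < v ->
  Rpower s (- p) * (1 - p * (v - s) / s) <= Rpower v (- p).
Proof.
  intros Hp Hs Hv.
  set (u := ln (v / s)).
  assert (Hvs : v = s * exp u).
  { unfold u. rewrite exp_ln by (apply Rdiv_lt_0_compat; lra). field. lra. }
  assert (Hpow : Rpower v (- p) = Rpower s (- p) * exp (- p * u)).
  { rewrite Hvs. unfold Rpower. rewrite ln_mult, ln_exp, <- exp_plus by (auto; apply exp_pos).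
    f_equal. ring. }
  assert (E1 := exp_ineq1_le (- p * u)).
  assert (E2 := exp_ineq1_le u).
  assert (Hslope : 1 - p * (v - s) / s <= exp (- p * u)).
  { replace (p * (v - s) / s) with (p * (exp u - 1)) by (rewrite Hvs; field; lra). nra. }
  rewrite Hpow. apply Rmult_le_compat_l; [apply Rlt_le, Rpower_pos | exact Hslope].
Qed.

Section AutonomousSystem.

Variables (a c k vs : R) (F U V : R -> R).

Hypothesis c_pos : 0 < c.
Hypothesis k_pos : 0 < k.
Hypothesis k_root : k * k - a * k + c = 0.
Hypothesis F_ge_tangent : forall v, 0 < v -> - c * (v - vs) <= F v.
Hypothesis F_neg : forall v, 0 < v -> vs < v -> F v < 0.
Hypothesis V_pos : forall t, 0 < t -> 0 < V t.
Hypothesis V_derive : forall t, 0 < t -> is_derive V t (U t / t).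
Hypothesis U_derive : forall t, 0 < t -> is_derive U t ((F (V t) - a * U t) / t).

Lemma U_crossing_down (x y : R) : 0 < x -> x < y -> 0 < U x -> U y < 0 ->
  exists z, x < z < y /\ U z = 0 /\ vs <= V z.
Proof.
  intros Hx Hxy HUx HUy.
  destruct (zero_crossing_down U (fun t => (F (V t) - a * U t) / t) x y)
    as [z [Hz [HUz Hdz]]]; try lra.
  { intros t Ht. apply U_derive. lra. }
  exists z. split; [exact Hz | split; [exact HUz |]].
  rewrite HUz in Hdz.
  assert (HF : F (V z) = (F (V z) - a * 0) / z * z) by (field; lra).
  apply Rnot_lt_le. intros Hlt.
  assert (Htan := F_ge_tangent (V z) (V_pos z ltac:(lra))).
  nra.
Qed.

Lemma U_crossing_up (x y : R) : 0 < x -> x < y -> U x < 0 -> 0 < U y ->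
  exists z, x < z < y /\ U z = 0 /\ V z <= vs.
Proof.
  intros Hx Hxy HUx HUy.
  destruct (zero_crossing_up U (fun t => (F (V t) - a * U t) / t) x y)
    as [z [Hz [HUz Hdz]]]; try lra.
  { intros t Ht. apply U_derive. lra. }
  exists z. split; [exact Hz | split; [exact HUz |]].
  rewrite HUz in Hdz.
  assert (HF : F (V z) = (F (V z) - a * 0) / z * z) by (field; lra).
  apply Rnot_lt_le. intros Hlt.
  assert (Hneg := F_neg (V z) (V_pos z ltac:(lra)) Hlt).
  nra.
Qed.

(* Since [k (a - k) = c], the tangent bound on [F] makes
   [t d/dt (U + k (V - vs)) + (a - k) (U + k (V - vs)) = F V + c (V - vs)] nonnegative. *)
Lemma lyapunov_nondecreasing (x y : R) : 0 < x -> x <= y ->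
  Rpower x (a - k) * (U x + k * (V x - vs)) <= Rpower y (a - k) * (U y + k * (V y - vs)).
Proof.
  intros Hx Hxy.
  apply (is_derive_nonneg_le (fun t => Rpower t (a - k) * (U t + k * (V t - vs)))
    (fun t => Rpower t (a - k) / t * (F (V t) + c * (V t - vs)))); [exact Hxy | intros t Ht..].
  - eapply is_derive_eq.
    + apply is_derive_Rmult; [apply is_derive_Rpower; lra |].
      apply is_derive_Rplus; [apply U_derive; lra |].
      apply is_derive_scal, is_derive_Rminus; [apply V_derive; lra | apply is_derive_const].
    + simpl. unfold zero. simpl.
      replace c with (a * k - k * k) by lra. field. lra.
  - assert (Htan := F_ge_tangent (V t) (V_pos t ltac:(lra))).
    apply Rmult_le_pos; [| lra].
    apply Rlt_le, Rdiv_lt_0_compat; [apply Rpower_pos | lra].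
Qed.

Lemma U_no_pos_neg_pos (r1 r2 r3 : R) : 0 < r1 -> r1 < r2 -> r2 < r3 ->
  0 < U r1 -> U r2 < 0 -> 0 < U r3 -> False.
Proof.
  intros H1 H12 H23 HU1 HU2 HU3.
  destruct (U_crossing_down r1 r2) as [z1 [Hz1 [HUz1 HVz1]]]; try lra.
  destruct (U_crossing_up r2 r3) as [z3 [Hz3 [HUz3 HVz3]]]; try lra.
  assert (Hbalance : forall t, z1 <= t <= z3 -> U t + k * (V t - vs) = 0).
  { intros t Ht.
    assert (L1 := lyapunov_nondecreasing z1 t ltac:(lra) ltac:(lra)).
    assert (L3 := lyapunov_nondecreasing t z3 ltac:(lra) ltac:(lra)).
    rewrite HUz1, Rplus_0_l in L1. rewrite HUz3, Rplus_0_l in L3.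
    assert (0 <= Rpower z1 (a - k) * (k * (V z1 - vs))).
    { apply Rmult_le_pos; [apply Rlt_le, Rpower_pos | apply Rmult_le_pos; lra]. }
    assert (Rpower z3 (a - k) * (k * (vs - V z3)) >= 0).
    { apply Rle_ge, Rmult_le_pos; [apply Rlt_le, Rpower_pos | apply Rmult_le_pos; lra]. }
    assert (Hprod : Rpower t (a - k) * (U t + k * (V t - vs)) = 0) by nra.
    apply Rmult_integral in Hprod as [Hp | Hp]; [| exact Hp].
    pose proof (Rpower_pos t (a - k)). lra. }
  (* On [z1, z3] the balance is the linear equation [t V' = - k (V - vs)], solved by [t^(-k)]. *)
  assert (Hconst : Rpower z1 k * (V z1 - vs) = Rpower r2 k * (V r2 - vs)).
  { apply (is_derive_0_eq (fun t => Rpower t k * (V t - vs))); [lra |]. intros t Ht.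
    eapply is_derive_eq.
    - apply is_derive_Rmult; [apply is_derive_Rpower; lra |].
      apply is_derive_Rminus; [apply V_derive; lra | apply is_derive_const].
    - specialize (Hbalance t ltac:(lra)). simpl. unfold zero. simpl.
      replace (k * Rpower t k / t * (V t - vs) + Rpower t k * (U t / t - 0))
        with (Rpower t k / t * (U t + k * (V t - vs))) by (field; lra).
      rewrite Hbalance. ring. }
  assert (HVz1_eq : V z1 = vs).
  { specialize (Hbalance z1 ltac:(lra)). rewrite HUz1 in Hbalance. nra. }
  rewrite HVz1_eq, Rminus_diag, Rmult_0_r in Hconst.
  specialize (Hbalance r2 ltac:(lra)).
  pose proof (Rpower_pos r2 k). nra.
Qed.

End AutonomousSystem.

Lemma at_most_two_sign_changes_of_no_pos_neg_pos (g : R -> R) :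
  (forall r1 r2 r3, 0 < r1 -> r1 < r2 -> r2 < r3 -> 0 < g r1 -> g r2 < 0 -> 0 < g r3 -> False) ->
  at_most_two_sign_changes g.
Proof.
  intros Hno [t1 [t2 [t3 [t4 [H1 [H12 [H23 [H34 [S12 [S23 S34]]]]]]]]]].
  destruct (Rlt_or_le 0 (g t1)) as [Hg1 | Hg1].
  - assert (g t2 < 0) by nra. assert (0 < g t3) by nra.
    apply (Hno t1 t2 t3); lra.
  - assert (g t1 < 0) by (destruct Hg1 as [| E]; [lra | rewrite E in S12; lra]).
    assert (0 < g t2) by nra. assert (g t3 < 0) by nra. assert (0 < g t4) by nra.
    apply (Hno t2 t3 t4); lra.
Qed.

Lemma at_most_two_sign_changes_opp (g : R -> R) :
  at_most_two_sign_changes g -> at_most_two_sign_changes (fun t => - g t).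
Proof.
  intros Hg [t1 [t2 [t3 [t4 H]]]]. apply Hg. exists t1, t2, t3, t4.
  now rewrite !Rmult_opp_opp in H.
Qed.

Lemma at_most_two_sign_changes_scale (f g K : R -> R) :
  (forall t, 0 < t -> 0 < K t) -> (forall t, 0 < t -> f t = K t * g t) ->
  at_most_two_sign_changes g -> at_most_two_sign_changes f.
Proof.
  intros HK Hf Hg [t1 [t2 [t3 [t4 [H1 [H12 [H23 [H34 [S12 [S23 S34]]]]]]]]]].
  assert (Hsign : forall x y, 0 < x -> 0 < y -> f x * f y < 0 -> g x * g y < 0).
  { intros x y Hx Hy Hxy. rewrite (Hf x Hx), (Hf y Hy) in Hxy.
    assert (HKxy : 0 < K x * K y) by (apply Rmult_lt_0_compat; auto).
    apply Rnot_le_lt. intros Hge.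
    assert (0 <= K x * K y * (g x * g y)) by (apply Rmult_le_pos; lra). nra. }
  apply Hg. exists t1, t2, t3, t4.
  repeat split; try lra; apply Hsign; auto; lra.
Qed.

Lemma quadratic_pos_root (a c : R) : 0 < a -> 4 * c <= a * a ->
  exists k, 0 < k /\ k * k - a * k + c = 0.
Proof.
  intros Ha Hdisc.
  assert (Hs := sqrt_sqrt (a * a - 4 * c) ltac:(lra)).
  pose proof (sqrt_pos (a * a - 4 * c)).
  exists ((a + sqrt (a * a - 4 * c)) / 2). split; [lra | nra].
Qed.

Lemma power_sub_linear_equilibrium (p b : R) : 0 < b -> 0 < p + 1 ->
  b * Rpower b (- / (p + 1)) = Rpower (Rpower b (- / (p + 1))) (- p).
Proof.
  intros Hb Hp.
  rewrite Rpower_mult, <- (Rpower_1 b) at 1 by exact Hb.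
  rewrite <- Rpower_plus. f_equal. field. lra.
Qed.

Lemma power_sub_linear_ge_tangent (p b s v : R) : 0 <= p -> 0 < s -> 0 < v ->
  b * s = Rpower s (- p) -> - ((p + 1) * b) * (v - s) <= Rpower v (- p) - b * v.
Proof.
  intros Hp Hs Hv Heq.
  assert (Htan := Rpower_opp_tangent p s v Hp Hs Hv).
  rewrite <- Heq in Htan.
  replace (b * s * (1 - p * (v - s) / s)) with (b * s - p * b * (v - s)) in Htan
    by (field; lra).
  lra.
Qed.

Lemma power_sub_linear_neg (p b s v : R) : 0 < p -> 0 < s -> s < v ->
  b * s = Rpower s (- p) -> Rpower v (- p) - b * v < 0.
Proof.
  intros Hp Hs Hsv Heq.
  assert (Hb : 0 < b).
  { apply (Rmult_lt_reg_r s); [exact Hs |]. rewrite Heq, Rmult_0_l. apply Rpower_pos. }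
  assert (Hlt : Rpower v (- p) < Rpower s (- p)).
  { rewrite !Rpower_Ropp. apply Rinv_lt_contravar.
    - apply Rmult_lt_0_compat; apply Rpower_pos.
    - apply Rlt_Rpower_l; lra. }
  nra.
Qed.

Definition ef_v (beta : R) (w : R -> R) (t : R) : R := w t / Rpower t beta.

Definition ef_u (beta : R) (w dw : R -> R) (t : R) : R :=
  (t * dw t - beta * w t) / Rpower t beta.

Lemma ef_v_pos (beta : R) (w : R -> R) (t : R) : 0 < w t -> 0 < ef_v beta w t.
Proof. intros Hw. apply Rdiv_lt_0_compat; [exact Hw | apply Rpower_pos]. Qed.

Lemma ef_v_derive (beta : R) (w dw : R -> R) (t : R) : 0 < t ->
  is_derive w t (dw t) -> is_derive (ef_v beta w) t (ef_u beta w dw t / t).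
Proof.
  intros Ht Hw. unfold ef_v, ef_u.
  pose proof (Rpower_pos t beta).
  eapply is_derive_eq.
  - apply is_derive_div; [exact Hw | apply is_derive_Rpower, Ht | lra].
  - cbv beta. field. lra.
Qed.

Lemma ef_v_power (alpha p beta t x : R) : 0 < t -> 0 < x -> beta * (p + 1) = alpha + 2 ->
  Rpower (x / Rpower t beta) (- p) = t * t * Rpower t alpha / Rpower t beta / Rpower x p.
Proof.
  intros Ht Hx Hbeta. unfold Rpower.
  rewrite ln_div, ln_exp by (auto; apply exp_pos).
  replace (t * t) with (exp (ln t + ln t)) by (rewrite exp_plus, exp_ln; auto).
  unfold Rdiv. rewrite <- !exp_Ropp, <- !exp_plus. f_equal.
  replace alpha with (beta * (p + 1) - 2) by lra. ring.
Qed.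

Lemma ef_u_derive (n : nat) (alpha p beta : R) (w dw ddw : R -> R) (t : R) :
  0 < t -> 0 < w t -> beta * (p + 1) = alpha + 2 ->
  is_derive w t (dw t) -> is_derive dw t (ddw t) ->
  ddw t + (INR n - 1) / t * dw t = Rpower t alpha / Rpower (w t) p ->
  is_derive (ef_u beta w dw) t
    ((Rpower (ef_v beta w t) (- p) - beta * (beta + (INR n - 2)) * ef_v beta w t
      - (2 * beta + (INR n - 2)) * ef_u beta w dw t) / t).
Proof.
  intros Ht Hwt Hbeta Hw Hdw Hode. unfold ef_u.
  pose proof (Rpower_pos t beta). pose proof (Rpower_pos (w t) p).
  eapply is_derive_eq.
  - apply is_derive_div; [| apply is_derive_Rpower, Ht | lra].
    apply is_derive_Rminus; [apply is_derive_Rmult; [apply is_derive_id | exact Hdw] |].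
    apply is_derive_scal, Hw.
  - unfold ef_v. rewrite (ef_v_power alpha p beta t (w t)) by assumption.
    replace (ddw t) with (Rpower t alpha / Rpower (w t) p - (INR n - 1) / t * dw t) by lra.
    simpl. unfold one. simpl. field. lra.
Qed.

Lemma mems_lambda_derive (alpha p beta : R) (w dw : R -> R) (t : R) :
  0 < t -> 0 < w t -> beta * (p + 1) = alpha + 2 -> is_derive w t (dw t) ->
  is_derive (mems_lambda alpha p w) t
    ((p + 1) * mems_lambda alpha p w t / (t * ef_v beta w t) * - ef_u beta w dw t).
Proof.
  intros Ht Hwt Hbeta Hw. unfold mems_lambda, ef_v, ef_u.
  pose proof (Rpower_pos t beta). pose proof (Rpower_pos (w t) (p + 1)).
  pose proof (Rpower_pos t (alpha + 2)).
  eapply is_derive_eq.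
  - apply is_derive_div; [apply is_derive_Rpower, Ht | | lra].
    apply (is_derive_Rcomp (fun y => Rpower y (p + 1)) w); [apply is_derive_Rpower, Hwt | exact Hw].
  - cbv beta. replace alpha with (beta * (p + 1) - 2) by lra.
    field. repeat split; lra.
Qed.

Lemma mems_lambda_sign_changes (alpha p beta : R) (w dw : R -> R) :
  0 < p + 1 -> beta * (p + 1) = alpha + 2 ->
  (forall t, 0 < t -> 0 < w t) -> (forall t, 0 < t -> is_derive w t (dw t)) ->
  at_most_two_sign_changes (ef_u beta w dw) ->
  at_most_two_sign_changes (fun t => Derive (mems_lambda alpha p w) t).
Proof.
  intros Hp Hbeta Hwpos Hdw Hu.
  apply (at_most_two_sign_changes_scale _ (fun t => - ef_u beta w dw t)
           (fun t => (p + 1) * mems_lambda alpha p w t / (t * ef_v beta w t))).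
  - intros t Ht.
    pose proof (ef_v_pos beta w t (Hwpos t Ht)).
    assert (0 < mems_lambda alpha p w t) by (apply Rdiv_lt_0_compat; apply Rpower_pos).
    apply Rdiv_lt_0_compat; nra.
  - intros t Ht. apply is_derive_unique, mems_lambda_derive; auto.
  - now apply at_most_two_sign_changes_opp.
Qed.

Lemma mems_characteristic_root (p beta m : R) : 0 < beta -> 0 < p ->
  2 * beta * (p + sqrt (p ^ 2 + p)) <= m ->
  exists k, 0 < k /\ k * k - (2 * beta + m) * k + (p + 1) * (beta * (beta + m)) = 0.
Proof.
  intros Hbeta Hp Hm.
  assert (Hr := sqrt_sqrt (p ^ 2 + p) ltac:(nra)).
  pose proof (sqrt_pos (p ^ 2 + p)).
  assert (Hgap : 0 <= 2 * beta * sqrt (p ^ 2 + p) <= m - 2 * beta * p) by nra.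
  assert (Hsq : (2 * beta * sqrt (p ^ 2 + p)) ^ 2 <= (m - 2 * beta * p) ^ 2)
    by (apply pow_incr; exact Hgap).
  apply quadratic_pos_root; nra.
Qed.

Theorem theorem4p2 (alpha p : R) (n : nat) (w dw ddw : R -> R) :
  0 <= alpha -> 1 < p ->
  2 + 2 * (alpha + 2) / (p + 1) * (p + sqrt (p ^ 2 + p)) <= INR n ->
  is_mems_w n alpha p w dw ddw ->
  at_most_two_sign_changes (fun t => Derive (mems_lambda alpha p w) t).
Proof.
  (* Only the equation on (0, oo) and the positivity of [w] are needed. *)
  intros Halpha Hp Hn (_ & Hwpos & _ & _ & Hdw & Hddw & Hode).
  assert (Hw : forall t, 0 < t -> 0 < w t) by (intros t Ht; apply Hwpos; lra).
  set (beta := (alpha + 2) / (p + 1)).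
  assert (Hbeta : beta * (p + 1) = alpha + 2) by (unfold beta; field; lra).
  assert (Hbeta_pos : 0 < beta) by (unfold beta; apply Rdiv_lt_0_compat; lra).
  assert (Hgap : 2 * beta * (p + sqrt (p ^ 2 + p)) <= INR n - 2).
  { replace (2 * beta) with (2 * (alpha + 2) / (p + 1)) by (unfold beta; field; lra). lra. }
  destruct (mems_characteristic_root p beta (INR n - 2)) as [k [Hk Hroot]]; try lra.
  set (b := beta * (beta + (INR n - 2))).
  assert (Hb : 0 < b) by (pose proof (sqrt_pos (p ^ 2 + p)); unfold b; nra).
  set (v0 := Rpower b (- / (p + 1))).
  assert (Hv0 : b * v0 = Rpower v0 (- p)) by (apply power_sub_linear_equilibrium; lra).
  apply (mems_lambda_sign_changes alpha p beta w dw); auto; try lra.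
  apply at_most_two_sign_changes_of_no_pos_neg_pos.
  apply (U_no_pos_neg_pos (2 * beta + (INR n - 2)) ((p + 1) * b) k v0
           (fun v => Rpower v (- p) - b * v) (ef_u beta w dw) (ef_v beta w)); auto; try nra.
  - intros v Hv. apply power_sub_linear_ge_tangent; auto; try lra. apply Rpower_pos.
  - intros v Hv Hlt. apply (power_sub_linear_neg p b v0); auto; try lra. apply Rpower_pos.
  - intros t Ht. now apply ef_v_pos, Hw.
  - intros t Ht. now apply ef_v_derive, Hdw.
  - intros t Ht. apply (ef_u_derive n alpha p beta w dw ddw); auto.
Qed.
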